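(* Let $H$ be a digraph (possibly with loops) and let $D$ be an $H$-colored semicomplete digraph. If $k \geq 3$, then $D$ has a $(k,H)$-kernel.
   Context: All digraphs are finite. A digraph is semicomplete if every two distinct vertices are joined by at least one arc. $D$ has no loops and comes with a map $\rho: A(D)\to V(H)$. For a walk $W=(x_0,\ldots,x_n)$ in $D$, there is an obstruction on $x_i$ if $(\rho(x_{i-1},x_i),\rho(x_i,x_{i+1})) \notin A(H)$; for an open walk this is considered at internal vertices $x_i$, $1\le i\le n-1$, for a closed walk at all $i\in\{0,\ldots,n-1\}$ with indices modulo $n$. $O_H(W)$ is the set of indices with an obstruction; the $H$-length is $l_H(W)=|O_H(W)|+1$ for open $W$ and $|O_H(W)|$ for closed $W$. A $(k,H)$-kernel ($k\ge2$) is a set $S\subseteq V(D)$ such that for every two distinct $u,v\in S$ every directed $uv$-path in $D$ has $H$-length at least $k$, and for every $x\in V(D)\setminus S$ there is a directed path from $x$ to a vertex of $S$ of $H$-length at most $k-1$. *)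

From mathcomp Require Import all_boot.
Set Implicit Arguments. Unset Strict Implicit. Unset Printing Implicit Defensive.

Section HColored.
Variables (VH : finType) (h : rel VH).
(* D : digraph on the finite vertex type T with arc relation a;
   rho assigns to each arc (x,y) of D (a x y) a vertex of H; its values on
   non-arcs are irrelevant. *)
Variables (T : finType) (a : rel T) (rho : T -> T -> VH).

Definition no_loops : Prop := irreflexive a.

Definition semicomplete : Prop := forall u v : T, u != v -> a u v || a v u.

(* Number of obstructions at the internal vertices of the walk x, y, s... ,
   i.e. obstructions at y, and then at the following internal vertices. *)
Fixpoint obs (x y : T) (s : seq T) : nat :=
  match s with
  | [::] => 0
  | z :: s' => (~~ h (rho x y) (rho y z)) + obs y z s'
  end.

(* H-length of the open walk x :: p : |O_H| + 1. *)
Definition hlen (x : T) (p : seq T) : nat :=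
  match p with
  | [::] => 1
  | y :: p' => (obs x y p').+1
  end.

Definition dpath (x v : T) (p : seq T) : bool :=
  [&& path a x p, uniq (x :: p) & last x p == v].

Definition kH_kernel (k : nat) (S : {set T}) : Prop :=
  (forall u v, u \in S -> v \in S -> u != v ->
     forall p, dpath u v p -> k <= hlen u p) /\
  (forall x, x \notin S ->
     exists v p, [/\ v \in S, dpath x v p & hlen x p <= k - 1]).

End HColored.

From mathcomp Require Import all_boot zify.

Set Implicit Arguments. Unset Strict Implicit. Unset Printing Implicit Defensive.

(* A vertex v of maximum in-degree in a semicomplete digraph is a king: every
   other vertex x reaches v in at most two steps.  Otherwise x -> v is not an
   arc, so v -> x is, and every in-neighbour y of v must be an in-neighbour of
   x (else x -> y -> v); hence the in-neighbourhood of x strictly contains that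
   of v.  A path with at most two arcs has at most one internal vertex, hence
   H-length at most 2 <= k - 1, and no path joins two distinct vertices of
   {v}; so {v} is a (k,H)-kernel whatever the colouring. *)

Section SingletonKernels.
Variables (VH : finType) (h : rel VH) (T : finType) (a : rel T) (rho : T -> T -> VH).

Lemma obs_le_size x y s : obs h rho x y s <= size s.
Proof.
elim: s x y => [//|z s IHs] x y /=.
by rewrite -add1n leq_add ?leq_b1.
Qed.

Lemma hlen_le_size x p : hlen h rho x p <= maxn 1 (size p).
Proof.
case: p => [//|y p] /=.
by rewrite (maxn_idPr _) // ltnS obs_le_size.
Qed.

Lemma kH_kernel_set1 k v :
    (forall x, x != v -> exists p, dpath a x v p && (hlen h rho x p <= k - 1)) ->
  kH_kernel h a rho k [set v].
Proof.
move=> reach_v; split.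
  by move=> u w; rewrite !in_set1 => /eqP -> /eqP ->; rewrite eqxx.
move=> x; rewrite in_set1 => xv.
have [p /andP[xp hlen_p]] := reach_v x xv.
by exists v, p; rewrite in_set1.
Qed.

End SingletonKernels.

Section Kings.
Variables (T : finType) (a : rel T).
Hypotheses (a_loopless : no_loops a) (a_semicomplete : semicomplete a).

Definition indegree (v : T) : nat := #|[set u | a u v]|.

Lemma max_indegree_king v :
    (forall w, indegree w <= indegree v) ->
  forall x, x != v -> a x v \/ exists2 w, a x w & a w v.
Proof.
move=> v_max x xv; case axv: (a x v); first by left.
case: (pickP (fun w => a x w && a w v)) => [w /andP[axw awv]|no_detour].
  by right; exists w.
have avx : a v x by move: (a_semicomplete xv); rewrite axv.
suff : indegree v < indegree x by rewrite ltnNge v_max.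
apply: proper_card; apply/properP; split.
  apply/subsetP => y; rewrite !inE => ayv.
  have yx : y != x by apply: contraTneq ayv => ->; rewrite axv.
  have := no_detour y; rewrite ayv andbT => /negbT nax.
  by move: (a_semicomplete yx); rewrite (negbTE nax) orbF.
by exists v; rewrite !inE ?avx ?a_loopless.
Qed.

Lemma dpath_arc x v : x != v -> a x v -> dpath a x v [:: v].
Proof. by move=> xv axv; rewrite /dpath /= axv !inE xv eqxx. Qed.

Lemma dpath_arc2 x w v : x != v -> a x w -> a w v -> dpath a x v [:: w; v].
Proof.
move=> xv axw awv.
have wx : w != x by apply: contraTneq axw => ->; rewrite a_loopless.
have wv : w != v by apply: contraTneq awv => ->; rewrite a_loopless.
by rewrite /dpath /= axw awv !inE eqxx eq_sym (negbTE wx) (negbTE xv) wv.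
Qed.

Lemma max_indegree_short_dpath v :
    (forall w, indegree w <= indegree v) ->
  forall x, x != v -> exists2 p, dpath a x v p & size p <= 2.
Proof.
move=> v_max x xv.
case: (max_indegree_king v_max xv) => [axv|[w axw awv]].
  by exists [:: v]; rewrite ?dpath_arc.
by exists [:: w; v]; rewrite ?dpath_arc2.
Qed.

End Kings.

Theorem theorem6 (VH : finType) (h : rel VH) (T : finType) (a : rel T)
  (rho : T -> T -> VH) (k : nat) :
  no_loops a -> semicomplete a -> 3 <= k ->
  exists S : {set T}, kH_kernel h a rho k S.
Proof.
move=> a_loopless a_semicomplete k_ge3.
case: (pickP (fun _ : T => true)) => [v0 _|T_empty]; last first.
  by exists set0; split=> [u|x]; [rewrite in_set0 | have := T_empty x].
have [v _ v_max] := @arg_maxnP T v0 xpredT (indegree a) isT.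
exists [set v]; apply: kH_kernel_set1 => x xv.
have [p xp size_p] :=
  max_indegree_short_dpath a_loopless a_semicomplete (fun w => v_max w isT) xv.
exists p; rewrite xp /=.
by apply: leq_trans (hlen_le_size h rho x p) _; lia.
Qed.
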